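(* There exist natural numbers $B_0,B_1,B_2,\dots$ such that for every finite set $\Omega$, every algebra $\Sigma$ of subsets of $\Omega$, and every function $\upsilon:\Sigma\to\mathbb{R}$, there exists a set $\mathcal{P}$ of probability measures on $\Sigma$ with $\upsilon(X)=\sup\{\mu(X):\mu\in\mathcal{P}\}$ for all $X\in\Sigma$ if and only if $\upsilon$ satisfies: (UPF1) $\upsilon(\emptyset)=0$; (UPF2) $\upsilon(\Omega)=1$; (UPF3) for all natural numbers $m,n,k\le B_{|\Omega|}$ and all $A,A_1,\dots,A_m\in\Sigma$, if the multiset $\{\!\{A_1,\dots,A_m\}\!\}$ is an $(n,k)$-cover of $(A,\Omega)$, then $k+n\,\upsilon(A)\le\sum_{i=1}^m\upsilon(A_i)$.
   Context: A probability measure on an algebra $\Sigma$ of subsets of $\Omega$ is a finitely additive $\mu:\Sigma\to[0,1]$ with $\mu(\emptyset)=0,\mu(\Omega)=1$. A multiset $\{\!\{A_1,\dots,A_m\}\!\}$ of subsets (not necessarily distinct) covers a set $X$ $n$ times if every $x\in X$ belongs to $A_i$ for at least $n$ distinct indices $i\in\{1,\dots,m\}$. It is an $(n,k)$-cover of $(A,\Omega)$ if it covers $\Omega$ $k$ times and covers $A$ $n+k$ times. *)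

From HB Require Import structures.
From mathcomp Require Import all_boot all_order all_algebra.
From mathcomp Require Import Rstruct.
From Stdlib Require Rdefinitions.
Notation R := Rdefinitions.R.
Set Implicit Arguments. Unset Strict Implicit. Unset Printing Implicit Defensive.
Import Order.TTheory GRing.Theory Num.Theory.
Local Open Scope ring_scope.

Definition is_algebra (T : finType) (Sig : {set {set T}}) : Prop :=
  [/\ set0 \in Sig,
      (forall A, A \in Sig -> ~: A \in Sig) &
      (forall A B, A \in Sig -> B \in Sig -> A :|: B \in Sig)].

(* finitely additive probability measure on Sig (values outside Sig ignored) *)
Definition prob_measure (T : finType) (Sig : {set {set T}}) (mu : {set T} -> R)
  : Prop :=
  [/\ (forall A, A \in Sig -> 0 <= mu A <= 1),
      mu set0 = 0, mu [set: T] = 1 &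
      (forall A B, A \in Sig -> B \in Sig -> [disjoint A & B] ->
         mu (A :|: B) = mu A + mu B)].

Definition is_sup_of (T : finType) (P : ({set T} -> R) -> Prop) (X : {set T})
  (s : R) : Prop :=
  (forall mu, P mu -> mu X <= s) /\
  (forall b : R, (forall mu, P mu -> mu X <= b) -> s <= b).

Definition covers_times (T : finType) (m : nat) (As : 'I_m -> {set T})
  (X : {set T}) (n : nat) : Prop :=
  forall x, x \in X -> (n <= #|[set i : 'I_m | x \in As i]|)%N.

Definition nk_cover (T : finType) (m : nat) (As : 'I_m -> {set T})
  (n k : nat) (A : {set T}) : Prop :=
  covers_times As [set: T] k /\ covers_times As A (n + k).

Definition UPF (T : finType) (Sig : {set {set T}}) (ups : {set T} -> R)
  (B : nat -> nat) : Prop :=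
  [/\ ups set0 = 0, ups [set: T] = 1 &
      forall (m n k : nat), (m <= B #|T|)%N -> (n <= B #|T|)%N -> (k <= B #|T|)%N ->
      forall (A : {set T}) (As : 'I_m -> {set T}),
        A \in Sig -> (forall i, As i \in Sig) ->
        nk_cover As n k A ->
        k%:R + n%:R * ups A <= \sum_(i < m) ups (As i)].

From HB Require Import structures.
From mathcomp Require Import all_boot all_order all_algebra.
From mathcomp Require Import Rstruct.
From mathcomp Require Import ring lra zify.
From Stdlib Require Import Classical.
Set Implicit Arguments. Unset Strict Implicit. Unset Printing Implicit Defensive.
Import Order.TTheory GRing.Theory Num.Theory.
Local Open Scope ring_scope.

(* A probability measure on a finite algebra is a sum of point weights spread
   over its atoms, so it satisfies every cover inequality, and so do suprema of
   such measures.  Conversely, to realise [ups X] as such a supremum it suffices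
   to find point masses [y] of total mass 1 with [y(Y) <= ups Y] on the algebra
   and [y(X) >= ups X].  Fourier-Motzkin elimination of the [|T|] variables of
   this system, whose coefficients lie in {-1, 0, 1}, shows that if it has no
   solution then some nonnegative integer combination of its rows, with total
   multiplicity bounded in terms of [|T|] only, reads [0 <= negative]; such a
   combination is an (n,k)-cover of (X, T) violating (UPF3). *)

Lemma exists_between (F : realFieldType) (lo hi : seq F) :
  (forall l h, l \in lo -> h \in hi -> l <= h) ->
  exists t, (forall l, l \in lo -> l <= t) /\ (forall h, h \in hi -> t <= h).
Proof.
elim: lo => [|l lo IH] lo_le_hi.
  elim: hi {lo_le_hi} => [|h hi [t [_ t_le]]]; first by exists 0.
  exists (Num.min h t); split=> // h'; rewrite inE => /orP[/eqP->|h'hi].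
    by rewrite ge_min lexx.
  by rewrite ge_min t_le ?orbT.
have [t [le_t t_le]] : exists t,
    (forall l, l \in lo -> l <= t) /\ (forall h, h \in hi -> t <= h).
  by apply: IH => l' h l'lo hhi; apply: lo_le_hi; rewrite ?inE ?l'lo ?orbT.
exists (Num.max l t); split.
  move=> l'; rewrite inE => /orP[/eqP->|l'lo]; first by rewrite le_max lexx.
  by rewrite le_max le_t ?orbT.
by move=> h hhi; rewrite ge_max t_le // andbT lo_le_hi // mem_head.
Qed.

Section FourierMotzkin.
Variables (F : realFieldType) (I V : finType) (a : I -> V -> int) (b : I -> F).

(* A multiplier vector [c] stands for the inequality [\sum_i c i * (row i)]
   derived from the system [\sum_v a i v * y v <= b i]. *)
Definition comb_coef (c : {ffun I -> nat}) (v : V) : int :=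
  \sum_i (c i)%:Z * a i v.
Definition comb_rhs (c : {ffun I -> nat}) : F := \sum_i (c i)%:R * b i.
Definition comb_lhs (y : V -> F) c : F := \sum_v (comb_coef c v)%:~R * y v.
Definition comb_sat (y : V -> F) c := comb_lhs y c <= comb_rhs c.

Definition fm_pair j (p n : {ffun I -> nat}) : {ffun I -> nat} :=
  [ffun i => (`|comb_coef n j| * p i + `|comb_coef p j| * n i)%N].

Definition fm_elim j (L : seq {ffun I -> nat}) :=
  [seq c <- L | comb_coef c j == 0] ++
  [seq fm_pair j p n | p <- [seq c <- L | 0 < comb_coef c j],
                       n <- [seq c <- L | comb_coef c j < 0]].

Definition fm_elims (s : seq V) L := foldr fm_elim L s.

Lemma comb_coef_pair j p n v : comb_coef (fm_pair j p n) v =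
  (`|comb_coef n j|%N)%:Z * comb_coef p v + (`|comb_coef p j|%N)%:Z * comb_coef n v.
Proof.
rewrite /comb_coef !mulr_sumr -big_split; apply: eq_bigr => i _.
by rewrite ffunE PoszD !PoszM mulrDl !mulrA.
Qed.

Lemma comb_rhs_pair j p n : comb_rhs (fm_pair j p n) =
  (`|comb_coef n j|%N)%:R * comb_rhs p + (`|comb_coef p j|%N)%:R * comb_rhs n.
Proof.
rewrite /comb_rhs !mulr_sumr -big_split; apply: eq_bigr => i _.
by rewrite ffunE natrD !natrM mulrDl !mulrA.
Qed.

Lemma comb_lhs_pair y j p n : comb_lhs y (fm_pair j p n) =
  (`|comb_coef n j|%N)%:R * comb_lhs y p + (`|comb_coef p j|%N)%:R * comb_lhs y n.
Proof.
rewrite /comb_lhs !mulr_sumr -big_split; apply: eq_bigr => v _.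
by rewrite comb_coef_pair intrD !intrM mulrDl !mulrA.
Qed.

Definition comb_rest (y : V -> F) j c := \sum_(v | v != j) (comb_coef c v)%:~R * y v.

Lemma comb_lhsE y j c : comb_lhs y c = (comb_coef c j)%:~R * y j + comb_rest y j c.
Proof. by rewrite /comb_lhs (bigD1 j). Qed.

Definition update (y : V -> F) j t := fun v => if v == j then t else y v.

Lemma update_at y j t : update y j t j = t.
Proof. by rewrite /update eqxx. Qed.

Lemma comb_rest_update y j t c : comb_rest (update y j t) j c = comb_rest y j c.
Proof. by apply: eq_bigr => v /negbTE vj; rewrite /update vj. Qed.

(* The value of [y j] at which [c] is tight, the other coordinates being fixed. *)
Definition fm_bound y j c : F :=
  (comb_rhs c - comb_rest y j c) / (comb_coef c j)%:~R.

Lemma fm_boundE y j c : comb_coef c j != 0 ->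
  (comb_coef c j)%:~R * fm_bound y j c = comb_rhs c - comb_rest y j c.
Proof. by move=> nz; rewrite /fm_bound mulrC divfK // intr_eq0. Qed.

Lemma fm_pair_bound_le y j p n :
  0 < comb_coef p j -> comb_coef n j < 0 -> comb_sat y (fm_pair j p n) ->
  fm_bound y j n <= fm_bound y j p.
Proof.
move=> p_pos n_neg; rewrite /comb_sat comb_lhs_pair comb_rhs_pair !(comb_lhsE _ j).
have -> : (`|comb_coef n j|%N)%:R = - (comb_coef n j)%:~R :> F.
  by rewrite -intrN -(ltz0_abs n_neg) pmulrn.
have -> : (`|comb_coef p j|%N)%:R = (comb_coef p j)%:~R :> F.
  by rewrite -{2}(gtz0_abs p_pos) pmulrn.
have En := fm_boundE y (ltr0_neq0 n_neg); have Ep := fm_boundE y (lt0r_neq0 p_pos).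
have rn : (comb_coef n j)%:~R < 0 :> F by rewrite ltrz0.
have rp : 0 < (comb_coef p j)%:~R :> F by rewrite ltr0z.
move=> sat_pair.
have : 0 <= - (comb_coef n j)%:~R * ((comb_coef p j)%:~R * fm_bound y j p) +
            (comb_coef p j)%:~R * ((comb_coef n j)%:~R * fm_bound y j n).
  by rewrite Ep En; lra.
have -> : forall u w x z : F, - u * (w * x) + w * (u * z) = (- u * w) * (x - z).
  by move=> *; ring.
by rewrite pmulr_rge0 ?subr_ge0 //; nra.
Qed.

Lemma fm_elim_sat_lift j L y : (forall c, c \in fm_elim j L -> comb_sat y c) ->
  exists t, forall c, c \in L -> comb_sat (update y j t) c.
Proof.
move=> sat_elim.
have [|t [le_t t_le]] := @exists_between F
    [seq fm_bound y j c | c <- L & comb_coef c j < 0]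
    [seq fm_bound y j c | c <- L & 0 < comb_coef c j].
  move=> l h /mapP[n]; rewrite mem_filter => /andP[n_neg nL] ->.
  move=> /mapP[p]; rewrite mem_filter => /andP[p_pos pL] ->.
  apply: fm_pair_bound_le => //; apply: sat_elim; rewrite mem_cat; apply/orP; right.
  by apply/allpairsP; exists (p, n); rewrite /= !mem_filter p_pos n_neg pL nL.
exists t => c cL; rewrite /comb_sat (comb_lhsE _ j) comb_rest_update update_at.
case: (ltrgtP (comb_coef c j) 0) => c_sgn.
- have /le_t : fm_bound y j c \in [seq fm_bound y j c | c <- L & comb_coef c j < 0].
    by rewrite map_f // mem_filter c_sgn.
  rewrite -(subrK (comb_rest y j c) (comb_rhs c)) lerD2r -fm_boundE ?ltr0_neq0 //.
  by rewrite ler_nM2l // ltrz0.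
- have /t_le : fm_bound y j c \in [seq fm_bound y j c | c <- L & 0 < comb_coef c j].
    by rewrite map_f // mem_filter c_sgn.
  rewrite -(subrK (comb_rest y j c) (comb_rhs c)) lerD2r -fm_boundE ?lt0r_neq0 //.
  by rewrite ler_pM2l // ltr0z.
- have : comb_sat y c by apply: sat_elim; rewrite mem_cat mem_filter c_sgn eqxx cL.
  by rewrite /comb_sat (comb_lhsE _ j) c_sgn !mul0r.
Qed.

Lemma fm_elims_sat_lift s L :
  (exists y, forall c, c \in fm_elims s L -> comb_sat y c) ->
  exists y, forall c, c \in L -> comb_sat y c.
Proof.
elim: s => [|j s IH] //= [y sat_y]; apply: IH.
by have [t sat_t] := fm_elim_sat_lift sat_y; exists (update y j t).
Qed.

Lemma comb_coef_fm_elim_eq0 j L c : c \in fm_elim j L -> comb_coef c j = 0.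
Proof.
rewrite mem_cat => /orP[|/allpairsP[[p n] [/=]]].
  by rewrite mem_filter => /andP[/eqP].
rewrite !mem_filter => /andP[p_pos _] /andP[n_neg _] ->.
by rewrite comb_coef_pair (ltz0_abs n_neg) (gtz0_abs p_pos); ring.
Qed.

Lemma fm_elim_coef0 j L v : (forall c, c \in L -> comb_coef c v = 0) ->
  forall c, c \in fm_elim j L -> comb_coef c v = 0.
Proof.
move=> L0 c; rewrite mem_cat => /orP[|/allpairsP[[p n] [/=]]].
  by rewrite mem_filter => /andP[_ /L0].
rewrite !mem_filter => /andP[_ /L0 pv] /andP[_ /L0 nv] ->.
by rewrite comb_coef_pair pv nv !mulr0 addr0.
Qed.

Lemma comb_coef_fm_elims_eq0 s L c v :
  c \in fm_elims s L -> v \in s -> comb_coef c v = 0.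
Proof.
elim: s c => [|j s IH] c //=; rewrite inE => c_in /orP[/eqP->|vs].
  exact: comb_coef_fm_elim_eq0 c_in.
by apply: fm_elim_coef0 c_in => c' c'_in; apply: IH.
Qed.

Definition fm_bounded (r m : nat) (L : seq {ffun I -> nat}) :=
  forall c, c \in L -> (forall v, `|comb_coef c v| <= r)%N /\ (\sum_i c i <= m)%N.

Lemma fm_elim_bounded j L r m : (0 < r)%N -> fm_bounded r m L ->
  fm_bounded (2 * r * r) (2 * r * m) (fm_elim j L).
Proof.
move=> r_gt0 bndL c; rewrite mem_cat => /orP[|/allpairsP[[p n] [/=]]].
  rewrite mem_filter => /andP[_ /bndL[coef_c sum_c]]; split; last by nia.
  by move=> v; have := coef_c v; nia.
rewrite !mem_filter => /andP[_ /bndL[coef_p sum_p]] /andP[_ /bndL[coef_n sum_n]] ->.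
split=> [v|].
  rewrite comb_coef_pair.
  set x := (_ * comb_coef p v)%R; set z := (_ * comb_coef n v)%R.
  have : (`|(x + z)%R| <= `|x| + `|z|)%N by lia.
  rewrite /x /z !abszM /=; move/leq_trans; apply.
  by have := coef_p v; have := coef_n v; have := coef_p j; have := coef_n j; nia.
have -> : (\sum_i fm_pair j p n i =
           `|comb_coef n j| * \sum_i p i + `|comb_coef p j| * \sum_i n i)%N.
  by rewrite !big_distrr -big_split; apply: eq_bigr => i _; rewrite ffunE.
by have := coef_p j; have := coef_n j; nia.
Qed.

Fixpoint fm_coef_bound k := if k is k.+1 then (2 * fm_coef_bound k ^ 2)%N else 1%N.
Fixpoint fm_mult_bound k :=
  if k is k.+1 then (2 * fm_coef_bound k * fm_mult_bound k)%N else 1%N.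

Lemma fm_coef_bound_gt0 k : (0 < fm_coef_bound k)%N.
Proof. by elim: k => //= k IH; nia. Qed.

Lemma fm_elims_bounded s L : fm_bounded 1 1 L ->
  fm_bounded (fm_coef_bound (size s)) (fm_mult_bound (size s)) (fm_elims s L).
Proof.
move=> bndL; elim: s => //= j s IH.
by rewrite expnS expn1 mulnA; apply: fm_elim_bounded; rewrite ?fm_coef_bound_gt0.
Qed.

Definition unit_comb (i0 : I) : {ffun I -> nat} := [ffun i => (i == i0 : nat)].

Lemma sum_unit_comb (G : nmodType) i0 (f : I -> nat -> G) :
  (forall i, f i 0%N = 0) -> \sum_i f i (unit_comb i0 i) = f i0 1%N.
Proof.
move=> f0; rewrite (bigD1 i0) //= big1 ?addr0; first by rewrite ffunE eqxx.
by move=> i /negbTE ne; rewrite ffunE ne.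
Qed.

Theorem farkas_bounded : (forall i v, (`|a i v| <= 1)%N) ->
  (exists y : V -> F, forall i, \sum_v (a i v)%:~R * y v <= b i) \/
  (exists c : {ffun I -> nat}, [/\ forall v, comb_coef c v = 0,
     comb_rhs c < 0 & (\sum_i c i <= fm_mult_bound #|V|)%N]).
Proof.
move=> a_small.
pose L0 := [seq unit_comb i | i <- enum I].
have coef_unit i v : comb_coef (unit_comb i) v = a i v.
  rewrite /comb_coef (sum_unit_comb i (f := fun i k => k%:Z * a i v)) ?mul1r //.
  by move=> ?; rewrite mul0r.
have bnd0 : fm_bounded 1 1 L0.
  move=> _ /mapP[i _ ->]; split; first by move=> v; rewrite coef_unit.
  by rewrite (sum_unit_comb i (f := fun _ k => k)).
have := fm_elims_bounded (s := enum V) bnd0; rewrite -cardE => bndE.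
have [/allP rhs_ge0|/allPn[c c_in]] :=
  boolP (all (fun c => 0 <= comb_rhs c) (fm_elims (enum V) L0)); last first.
  rewrite -ltNge => rhs_neg; right; exists c; split=> //; last by case: (bndE c c_in).
  by move=> v; apply: (comb_coef_fm_elims_eq0 c_in); rewrite mem_enum.
left; have [y sat_y] : exists y, forall c, c \in L0 -> comb_sat y c.
  apply: (@fm_elims_sat_lift (enum V)); exists (fun _ => 0) => c c_in.
  by rewrite /comb_sat /comb_lhs big1 ?rhs_ge0 // => v _; rewrite mulr0.
exists y => i; have := sat_y (unit_comb i).
rewrite map_f ?mem_enum // => /(_ isT).
rewrite /comb_sat /comb_rhs (sum_unit_comb i (f := fun i k => k%:R * b i)) ?mul1r;
  last by move=> ?; rewrite mul0r.
by rewrite /comb_lhs; under eq_bigr do rewrite coef_unit.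
Qed.

End FourierMotzkin.

Section Algebra.
Variables (T : finType) (Sig : {set {set T}}).
Hypothesis Sig_algebra : is_algebra Sig.

Lemma algebra0 : set0 \in Sig. Proof. by case: Sig_algebra. Qed.

Lemma algebraC A : A \in Sig -> ~: A \in Sig.
Proof. by case: Sig_algebra => _ + _; apply. Qed.

Lemma algebraU A B : A \in Sig -> B \in Sig -> A :|: B \in Sig.
Proof. by case: Sig_algebra => _ _; apply. Qed.

Lemma algebraT : [set: T] \in Sig.
Proof. by rewrite -setC0 algebraC ?algebra0. Qed.

Lemma algebraI A B : A \in Sig -> B \in Sig -> A :&: B \in Sig.
Proof.
by move=> SA SB; rewrite -[A :&: B]setCK setCI algebraC ?algebraU ?algebraC.
Qed.

Lemma algebraD A B : A \in Sig -> B \in Sig -> A :\: B \in Sig.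
Proof. by move=> SA SB; rewrite setDE algebraI ?algebraC. Qed.

Definition atom x := \bigcap_(S in Sig | x \in S) S.

Lemma atom_in x : atom x \in Sig.
Proof.
apply: (big_ind (fun X => X \in Sig)); first exact: algebraT.
  exact: algebraI.
by move=> S /andP[].
Qed.

Lemma mem_atom x : x \in atom x.
Proof. by apply/bigcapP => S /andP[]. Qed.

Lemma atom_sub x S : S \in Sig -> x \in S -> atom x \subset S.
Proof. by move=> SS xS; apply: bigcap_inf; rewrite SS. Qed.

Lemma atom_eq x y : y \in atom x -> atom y = atom x.
Proof.
move=> yx; apply/eqP; rewrite eqEsubset atom_sub ?atom_in //=.
have [xy|nxy] := boolP (x \in atom y); first by rewrite atom_sub ?atom_in.
have : atom x \subset ~: atom y by rewrite atom_sub ?algebraC ?atom_in ?inE.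
by move/subsetP/(_ y yx); rewrite inE mem_atom.
Qed.

Variables (mu : {set T} -> R).
Hypothesis mu_prob : prob_measure Sig mu.

Lemma measure_ge0 A : A \in Sig -> 0 <= mu A.
Proof. by case: mu_prob => + _ _ _ => /[apply] /andP[]. Qed.

Lemma measureU A B : A \in Sig -> B \in Sig -> [disjoint A & B] ->
  mu (A :|: B) = mu A + mu B.
Proof. by case: mu_prob => _ _ _; apply. Qed.

Definition atom_weight x := mu (atom x) / #|atom x|%:R.

Lemma atom_weight_ge0 x : 0 <= atom_weight x.
Proof. by rewrite divr_ge0 ?ler0n ?measure_ge0 ?atom_in. Qed.

Lemma measure_sum_weight S : S \in Sig -> mu S = \sum_(x in S) atom_weight x.
Proof.
move: {2}#|S| (leqnn #|S|) => n; elim: n S => [|n IH] S.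
  by rewrite leqn0 cards_eq0 => /eqP-> _; rewrite big_set0; case: mu_prob.
move=> S_small SS; have [->|[x xS]] := set_0Vmem S.
  by rewrite big_set0; case: mu_prob.
have ax_sub := atom_sub SS xS.
have SE : S = atom x :|: (S :\: atom x).
  by apply/setP => y; rewrite !inE; case: (boolP (y \in atom x)) => // /(subsetP ax_sub).
have ax_disj : [disjoint atom x & S :\: atom x].
  by rewrite -setI_eq0 setDE setICA setICr setI0.
rewrite SE measureU ?atom_in ?algebraD ?atom_in // -SE (big_setID (atom x)) /=.
rewrite (setIidPr ax_sub); congr (_ + _); last first.
  apply: IH; last by rewrite algebraD ?atom_in.
  have : (#|S :\: atom x| < #|S|)%N.
    apply/proper_card/properP; split; first exact: subsetDl.
    by exists x; rewrite ?inE ?mem_atom.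
  by move=> lt; rewrite -ltnS (leq_trans lt S_small).
rewrite (eq_bigr (fun _ => atom_weight x)) => [|y /atom_eq]; last by rewrite /atom_weight => ->.
rewrite sumr_const -mulr_natr /atom_weight divfK // pnatr_eq0 -lt0n card_gt0.
by apply/set0Pn; exists x; apply: mem_atom.
Qed.

Lemma sum_measure_count m (As : 'I_m -> {set T}) : (forall i, As i \in Sig) ->
  \sum_i mu (As i) = \sum_x #|[set i | x \in As i]|%:R * atom_weight x.
Proof.
move=> SAs; under eq_bigr do rewrite measure_sum_weight // big_mkcond.
rewrite exchange_big /=; apply: eq_bigr => x _.
rewrite -big_mkcond /= (eq_bigl (mem [set i | x \in As i])) => [|i]; last by rewrite /= inE.
by rewrite sumr_const mulr_natl.
Qed.

Lemma prob_measure_cover m n k A (As : 'I_m -> {set T}) :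
  A \in Sig -> (forall i, As i \in Sig) -> nk_cover As n k A ->
  k%:R + n%:R * mu A <= \sum_i mu (As i).
Proof.
move=> SA SAs [coverT coverA].
have total : \sum_x atom_weight x = 1.
  case: mu_prob => _ _ <- _; rewrite measure_sum_weight ?algebraT //.
  by apply: eq_bigl => x; rewrite inE.
have -> : k%:R + n%:R * mu A = \sum_x (k + n * (x \in A))%:R * atom_weight x.
  have -> : \sum_x (k + n * (x \in A))%:R * atom_weight x =
      k%:R * \sum_x atom_weight x + n%:R * \sum_(x in A) atom_weight x.
    rewrite [\sum_(x in A) _]big_mkcond /= !mulr_sumr -big_split /=.
    apply: eq_bigr => x _.
    by case: (x \in A); rewrite ?muln1 ?muln0 ?addn0 ?natrD ?mulr0 ?addr0 ?mulrDl.
  by rewrite total mulr1 -measure_sum_weight.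
rewrite sum_measure_count //; apply: ler_sum => x _.
rewrite ler_wpM2r ?atom_weight_ge0 // ler_nat.
by case: (boolP (x \in A)) => xA; rewrite ?muln1 ?muln0 ?addn0 ?(addnC k) ?coverA ?coverT.
Qed.

End Algebra.

Lemma is_sup_of_inhabited (T : finType) P (X : {set T}) s :
  is_sup_of P X s -> exists mu, P mu.
Proof.
move=> [_ s_least]; apply: NNPP => P0.
have := s_least (s - 1) (fun mu Pmu => False_ind _ (P0 (ex_intro _ mu Pmu))).
lra.
Qed.

Lemma is_sup_of_const (T : finType) P (X : {set T}) s v :
  (forall mu, P mu -> mu X = v) -> is_sup_of P X s -> s = v.
Proof.
move=> PX sup_s; have [mu Pmu] := is_sup_of_inhabited sup_s.
case: sup_s => /(_ mu Pmu); rewrite PX // => v_le /(_ v) s_le.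
by apply/eqP; rewrite eq_le v_le s_le // => mu' /PX->.
Qed.

Section Forward.
Variables (T : finType) (Sig : {set {set T}}) (ups : {set T} -> R).
Hypothesis Sig_algebra : is_algebra Sig.

Lemma sup_prob_measures_UPF (B : nat -> nat) (P : ({set T} -> R) -> Prop) :
  (forall mu, P mu -> prob_measure Sig mu) ->
  (forall X, X \in Sig -> is_sup_of P X (ups X)) -> UPF Sig ups B.
Proof.
move=> P_prob P_sup; split.
- by apply: is_sup_of_const (P_sup _ (algebra0 Sig_algebra)) => mu /P_prob[].
- by apply: is_sup_of_const (P_sup _ (algebraT Sig_algebra)) => mu /P_prob[].
move=> m n k _ _ _ A As SA SAs cover.
have cover_mu mu : P mu -> k%:R + n%:R * mu A <= \sum_i ups (As i).
  move=> Pmu; apply: le_trans (prob_measure_cover Sig_algebra (P_prob _ Pmu) SA SAs cover) _.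
  by apply: ler_sum => i _; case: (P_sup _ (SAs i)) => + _; apply.
have [n0|n_gt0] := posnP n.
  have [mu0 Pmu0] := is_sup_of_inhabited (P_sup _ SA).
  by have := cover_mu _ Pmu0; rewrite n0 !mul0r.
rewrite addrC -lerBrDr -ler_pdivlMl ?ltr0n //; case: (P_sup _ SA) => _; apply.
by move=> mu Pmu; rewrite ler_pdivlMl ?ltr0n // lerBrDr addrC cover_mu.
Qed.

End Forward.

Lemma card_nth_count (Z : Type) (s : seq Z) (x0 : Z) (p : pred Z) :
  #|[set i : 'I_(size s) | p (nth x0 s i)]| = count p s.
Proof. by rewrite -sum1dep_card -sum1_count (big_nth x0) big_mkord. Qed.

Lemma sum_intr_indicator (T : finType) (p : pred T) (y : T -> R) :
  \sum_v ((p v)%:Z)%:~R * y v = \sum_(v | p v) y v.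
Proof.
by rewrite [RHS]big_mkcond; apply: eq_bigr => v _; case: (p v); rewrite ?mul1r ?mul0r.
Qed.

Lemma sum_intr_neg_indicator (T : finType) (p : pred T) (y : T -> R) :
  \sum_v (- (p v)%:Z)%:~R * y v = - \sum_(v | p v) y v.
Proof.
by rewrite -sum_intr_indicator -sumrN; apply: eq_bigr => v _; rewrite intrN mulNr.
Qed.

Definition point_mass (T : finType) (y : T -> R) (Y : {set T}) := \sum_(v in Y) y v.

Lemma point_mass_prob (T : finType) (Sig : {set {set T}}) (y : T -> R) :
  (forall v, 0 <= y v) -> \sum_v y v = 1 -> prob_measure Sig (point_mass y).
Proof.
move=> y_ge0 y_sum1; split=> [A _||| A B _ _ AB].
- by rewrite sumr_ge0 //= -y_sum1 [leRHS](bigID (mem A)) lerDl sumr_ge0.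
- by rewrite /point_mass big_set0.
- by rewrite -y_sum1; apply: eq_bigl => v; rewrite inE.
- by rewrite /point_mass (eq_bigl [predU A & B]) ?bigU // => v; rewrite !inE.
Qed.

Section CoverSeq.
Variables (T : finType) (Sig : {set {set T}}) (w : {set T} -> nat).

Definition cover_seq := flatten [seq nseq (w Y) Y | Y <- enum Sig].
Definition cover_count v := (\sum_(Y in Sig) w Y * (v \in Y))%N.

Lemma size_cover_seq : size cover_seq = (\sum_(Y in Sig) w Y)%N.
Proof.
rewrite size_flatten sumnE /shape -map_comp big_map -big_enum.
by apply: eq_bigr => Y _; rewrite /= size_nseq.
Qed.

Lemma nth_cover_seq_in (i : 'I_(size cover_seq)) : nth set0 cover_seq i \in Sig.
Proof.
have /flattenP[r /mapP[Y]] := mem_nth set0 (ltn_ord i).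
by rewrite mem_enum => SY -> /nseqP[->].
Qed.

Lemma card_cover_seq v :
  #|[set i : 'I_(size cover_seq) | v \in nth set0 cover_seq i]| = cover_count v.
Proof.
rewrite (card_nth_count cover_seq set0 (fun Y : {set T} => v \in Y)).
rewrite count_flatten sumnE big_map /cover_count -big_enum big_map.
by apply: eq_bigr => Y _; rewrite count_nseq mulnC.
Qed.

Lemma sum_cover_seq (f : {set T} -> R) :
  \sum_(i < size cover_seq) f (nth set0 cover_seq i) = \sum_(Y in Sig) (w Y)%:R * f Y.
Proof.
rewrite -(big_mkord xpredT (fun i => f (nth set0 cover_seq i))) -(big_nth set0 xpredT f).
rewrite big_flatten big_map -big_enum.
by apply: eq_bigr => Y _; rewrite big_nseq iter_addr_0 mulr_natl.
Qed.

End CoverSeq.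

Section UPFSystem.
Variables (T : finType) (Sig : {set {set T}}) (ups : {set T} -> R) (X : {set T}).

Definition upf_index := ({set T} + (bool + T))%type.

(* Linear system in point masses [y] whose solutions are the measures below
   [ups] reaching [ups X] at [X]: row [inl Y] is [y(Y) <= ups Y] (void unless
   [Y \in Sig]); [inr (inl true)] is [-y(T) <= -1]; [inr (inl false)] is
   [-y(X) <= -ups X]; [inr (inr x)] is [-y x <= 0]. *)
Definition upf_coef (i : upf_index) (v : T) : int :=
  match i with
  | inl Y => if Y \in Sig then (v \in Y)%:Z else 0
  | inr (inl true) => -1
  | inr (inl false) => - (v \in X)%:Z
  | inr (inr x) => - (v == x)%:Z
  end.

Definition upf_rhs (i : upf_index) : R :=
  match i with
  | inl Y => if Y \in Sig then ups Y else 0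
  | inr (inl true) => -1
  | inr (inl false) => - ups X
  | inr (inr _) => 0
  end.

Lemma upf_coef_small i v : (`|upf_coef i v| <= 1)%N.
Proof.
case: i => [Y|[[]|x]] /=; rewrite ?abszN //.
- by case: (Y \in Sig); case: (v \in Y).
- by case: (v \in X).
- by case: (v == x).
Qed.

Variable c : {ffun upf_index -> nat}.

Let w Y := c (inl Y).
Let k := c (inr (inl true)).
Let n := c (inr (inl false)).

Lemma sum_upf_index :
  (\sum_i c i = \sum_Y w Y + (k + n + \sum_x c (inr (inr x))))%N.
Proof. by rewrite big_sumType /= big_sumType /= big_bool. Qed.

Lemma comb_coef_upf v : comb_coef upf_coef c v =
  (cover_count Sig w v)%:Z - k%:Z - (n * (v \in X))%N%:Z - (c (inr (inr v)))%:Z.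
Proof.
rewrite /comb_coef big_sumType /= big_sumType /= big_bool /=.
have -> : \sum_x (c (inr (inr x)))%:Z * - (v == x)%:Z = - (c (inr (inr v)))%:Z.
  rewrite (bigD1 v) //= eqxx big1 ?addr0 ?mulrN1 // => x /negbTE.
  by rewrite eq_sym => ->; rewrite mulr0.
have -> : \sum_Y (w Y)%:Z * (if Y \in Sig then (v \in Y)%:Z else 0) =
          (cover_count Sig w v)%:Z.
  rewrite /cover_count -natz natr_sum [RHS]big_mkcond; apply: eq_bigr => Y _.
  by case: (Y \in Sig); rewrite ?mulr0 // natrM natz; case: (v \in Y).
rewrite PoszM mulrN1 mulrN; ring.
Qed.

Lemma comb_rhs_upf : comb_rhs upf_rhs c =
  \sum_(Y in Sig) (w Y)%:R * ups Y - k%:R - n%:R * ups X.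
Proof.
rewrite /comb_rhs big_sumType /= big_sumType /= big_bool /=.
have -> : \sum_x (c (inr (inr x)))%:R * 0 = 0 :> R.
  by apply: big1 => x _; rewrite mulr0.
rewrite [\sum_(Y in Sig) _]big_mkcond /= mulrN1 mulrN addr0 addrA; congr (_ - _ - _).
by apply: eq_bigr => Y _; case: (Y \in Sig); rewrite ?mulr0.
Qed.

End UPFSystem.

Section Backward.
Variables (T : finType) (Sig : {set {set T}}) (ups : {set T} -> R).
Hypothesis Sig_algebra : is_algebra Sig.

(* An infeasibility certificate of the system is an (n,k)-cover violating (UPF3). *)
Lemma UPF_no_certificate X (c : {ffun upf_index T -> nat}) :
  X \in Sig -> UPF Sig ups fm_mult_bound ->
  (forall v, comb_coef (upf_coef Sig X) c v = 0) ->
  comb_rhs (upf_rhs Sig ups X) c < 0 -> (\sum_i c i <= fm_mult_bound #|T|)%N ->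
  False.
Proof.
move=> SX [_ _ upf3] coef0 rhs_neg c_small.
pose w Y := c (inl Y); pose s := cover_seq Sig w.
pose k := c (inr (inl true)); pose n := c (inr (inl false)).
have cover : nk_cover (fun i : 'I_(size s) => nth set0 s i) n k X.
  by split=> v vX; rewrite card_cover_seq; have := coef0 v;
    rewrite comb_coef_upf -/w -/k -/n ?vX; lia.
have := sum_upf_index c; rewrite -/k -/n => c_sum.
have w_small : (\sum_(Y in Sig) w Y <= \sum_Y c (inl Y))%N.
  by rewrite [leqRHS](bigID (mem Sig)) leq_addr.
have s_small : (size s <= fm_mult_bound #|T|)%N by rewrite size_cover_seq; lia.
have n_small : (n <= fm_mult_bound #|T|)%N by lia.
have k_small : (k <= fm_mult_bound #|T|)%N by lia.
have := upf3 _ _ _ s_small n_small k_small X _ SX (@nth_cover_seq_in _ _ _) cover.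
rewrite sum_cover_seq; have := rhs_neg; rewrite comb_rhs_upf; lra.
Qed.

Lemma UPF_dominating_measure X : X \in Sig -> UPF Sig ups fm_mult_bound ->
  exists mu, [/\ prob_measure Sig mu, forall Y, Y \in Sig -> mu Y <= ups Y
                & ups X <= mu X].
Proof.
move=> SX upf; have [[y sat_y]|[c [coef0 rhs_neg c_small]]] :=
  @farkas_bounded _ _ _ _ (upf_rhs Sig ups X) (upf_coef_small Sig X); last first.
  by case: (UPF_no_certificate SX upf coef0 rhs_neg c_small).
have dom Y : Y \in Sig -> point_mass y Y <= ups Y.
  by move=> SY; have := sat_y (inl Y); rewrite /= SY sum_intr_indicator.
have y_ge0 v : 0 <= y v.
  by have := sat_y (inr (inr v)); rewrite /= sum_intr_neg_indicator big_pred1_eq oppr_le0.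
have y_sum1 : \sum_v y v = 1.
  have := dom _ (algebraT Sig_algebra); case: upf => _ -> _.
  rewrite /point_mass (eq_bigl predT) => [mass_le1|v]; last by rewrite inE.
  have := sat_y (inr (inl true)); rewrite /=.
  under eq_bigr do rewrite intrN mulNr mul1r.
  by rewrite sumrN; lra.
exists (point_mass y); split; [exact: point_mass_prob | exact: dom |].
by have := sat_y (inr (inl false)); rewrite /= sum_intr_neg_indicator lerN2.
Qed.

End Backward.

Theorem theorem2 :
  exists B : nat -> nat,
    forall (T : finType) (Sig : {set {set T}}) (ups : {set T} -> R),
      is_algebra Sig ->
      ((exists P : ({set T} -> R) -> Prop,
          (forall mu, P mu -> prob_measure Sig mu) /\
          (forall X, X \in Sig -> is_sup_of P X (ups X)))
       <-> UPF Sig ups B).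
Proof.
exists fm_mult_bound => T Sig ups Sig_algebra; split.
  by case=> P [P_prob P_sup]; apply: sup_prob_measures_UPF P_prob P_sup.
move=> upf; exists (fun mu => prob_measure Sig mu /\ forall Y, Y \in Sig -> mu Y <= ups Y).
split=> [mu [] // | X SX]; split=> [mu [_ ->] // | b b_ub].
have [mu [mu_prob mu_dom ups_le]] := UPF_dominating_measure Sig_algebra SX upf.
exact: le_trans ups_le (b_ub _ (conj mu_prob mu_dom)).
Qed.
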